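(* Let $a,b,c,y$ be real numbers with $c<b$, $0<b$, $y>0$ and $b<y^2<a$. Then \[ \int_{\sqrt{b}}^{y}\frac{\mathrm{d}u}{u\sqrt{(a-u^2)(u^2-b)(u^2-c)}} =\frac{1}{b}\sqrt{\frac{y^2-b}{(a-b)(b-c)}}\;\mathrm{F}_{D}^{(3)}\left(\tfrac12;1,\tfrac12,\tfrac12;\tfrac32;\ -\frac{y^2-b}{b},\,\frac{y^2-b}{a-b},\,-\frac{y^2-b}{b-c}\right). \]
   Context: For $n\ge1$, the Lauricella hypergeometric function of $n$ variables is \[ \mathrm{F}_{D}^{(n)}(a;b_1,\dots,b_n;c;x_1,\dots,x_n)=\sum_{m_1,\dots,m_n\ge0}\frac{(a)_{m_1+\cdots+m_n}(b_1)_{m_1}\cdots(b_n)_{m_n}}{(c)_{m_1+\cdots+m_n}\,m_1!\cdots m_n!}\,x_1^{m_1}\cdots x_n^{m_n},\qquad |x_i|<1, \] where $(\lambda)_m=\Gamma(\lambda+m)/\Gamma(\lambda)$ is the Pochhammer symbol; for $\operatorname{Re}c>\operatorname{Re}a>0$ it equals $\frac{\Gamma(c)}{\Gamma(a)\Gamma(c-a)}\int_0^1 u^{a-1}(1-u)^{c-a-1}\prod_{i=1}^n(1-x_iu)^{-b_i}\,\mathrm{d}u$, which gives its analytic continuation to $x_i\notin[1,\infty)$. *)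

From HB Require Import structures.
From mathcomp Require Import all_boot all_order all_algebra.
From mathcomp Require Import all_classical all_reals all_analysis.
Set Implicit Arguments. Unset Strict Implicit. Unset Printing Implicit Defensive.
Import Order.TTheory GRing.Theory Num.Theory.
Import numFieldNormedType.Exports.
Local Open Scope classical_set_scope.
Local Open Scope ring_scope.

(* Euler Beta function B(p,q) = int_0^1 u^(p-1) (1-u)^(q-1) du  (p, q > 0),
   so that Gamma(c)/(Gamma(a) Gamma(c-a)) = 1 / B(a, c-a). *)
Definition betaR (R : realType) (p q : R) : \bar R :=
  (\int[@lebesgue_measure R]_(u in `]0%R, 1%R[) (u `^ (p - 1) * (1 - u) `^ (q - 1))%:E)%E.

(* Lauricella F_D^(n)(a; b_1..b_n; c; x_1..x_n), for real parameters with
   c > a > 0 and real x_i < 1, given by Euler's integral representation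
   (the analytic continuation of the defining power series):
   Gamma(c)/(Gamma(a)Gamma(c-a)) int_0^1 u^(a-1) (1-u)^(c-a-1)
       prod_i (1 - x_i u)^(-b_i) du. *)
Definition lauricellaFD (R : realType) (n : nat) (a : R) (b : 'I_n -> R) (c : R)
    (x : 'I_n -> R) : \bar R :=
  ((\int[@lebesgue_measure R]_(u in `]0%R, 1%R[)
      (u `^ (a - 1) * (1 - u) `^ (c - a - 1)
       * \prod_(i < n) (1 - x i * u) `^ (- b i))%:E) / betaR a (c - a))%E.

(* With t = (u^2 - b) / (y^2 - b) the left integrand becomes a constant
   multiple of t^(-1/2) K(t), where
   K(t) = (1 + p t)^-1 (1 - q t)^(-1/2) (1 + r t)^(-1/2),
   p = (y^2 - b)/b, q = (y^2 - b)/(a - b), r = (y^2 - b)/(b - c), is the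
   product in Euler's integral for F_D^(3) at these parameters, and
   B(1/2, 1) = 2.  Both integrands blow up at an endpoint, so the two sides
   are evaluated by an improper fundamental theorem of calculus on an open
   interval, with the common primitive t |-> G(sqrt t), where G is a
   primitive of w |-> 2 K(w^2); the substitution w = sqrt t removes the
   singularity at t = 0. *)
From HB Require Import structures.
From mathcomp Require Import all_boot all_order all_algebra.
From mathcomp Require Import all_classical all_reals all_analysis.
From mathcomp Require Import ring lra measurable_realfun.
Import Order.TTheory GRing.Theory Num.Theory.
Import numFieldNormedType.Exports.
Local Open Scope classical_set_scope.
Local Open Scope ring_scope.

Section FTC_open_interval.
Context {R : realType}.
Notation mu := (@lebesgue_measure R).

Lemma is_derive_continuous {V : normedModType R} (f : R -> V) (x : R) (df : V) :
  is_derive x 1 f df -> {for x, continuous f}.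
Proof.
by move=> fdf; apply/differentiable_continuous/derivable1_diffP; exact: ex_derive.
Qed.

Lemma continuous_primitive (f : R -> R) (a b : R) : a < b ->
  {in `[a, b], continuous f} ->
  exists F : R -> R, {in `]a, b[, forall x : R, is_derive x 1 F (f x)}.
Proof.
move=> ab cf; exists (fun x => \int[mu]_(t in `[a, x]) f t)%R.
have intf : mu.-integrable `[a, b] (EFin \o f).
  apply: continuous_compact_integrable; first exact: segment_compact.
  by apply: continuous_in_subspaceT => x /set_mem; exact: cf.
move=> x; rewrite in_itv /= => /andP[ax xb].
have xab : x \in `[a, b] by rewrite in_itv /= !ltW.
have [dF F'f] := continuous_FTC1_closed xb intf ax (cf x xab).
by apply: DeriveDef; [exact: dF | rewrite -derive1E F'f].
Qed.

Lemma continuous_FTC2_in_oo (f F : R -> R) (a b c d : R) :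
  a < c -> c < d -> d < b ->
  {in `]a, b[, continuous f} -> {in `]a, b[, forall x : R, is_derive x 1 F (f x)} ->
  (\int[mu]_(x in `[c, d]) (f x)%:E = (F d - F c)%:E)%E.
Proof.
move=> ac cd db cf dF.
have sub x : x \in `[c, d] -> x \in `]a, b[.
  by rewrite !in_itv /= => /andP[cx xd]; rewrite (lt_le_trans ac cx) (le_lt_trans xd db).
have Fc x : x \in `[c, d] -> {for x, continuous F}.
  by move=> /sub/dF; exact: is_derive_continuous.
rewrite EFinB; apply: (continuous_FTC2 cd).
- by apply: continuous_in_subspaceT => x /set_mem/sub; exact: cf.
- split.
  + by move=> x /subset_itv_oo_cc/sub/dF dFx; exact: ex_derive.
  + by apply: cvg_at_right_filter; apply: Fc; rewrite in_itv /= lexx ltW.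
  + by apply: cvg_at_left_filter; apply: Fc; rewrite in_itv /= lexx ltW.
- by move=> x /subset_itv_oo_cc/sub/dF dFx; rewrite derive1E derive_val.
Qed.

Lemma ge0_cvg_integral_itv_cc_oo (f : R -> R) (a b : R) (e : R^nat) :
  {in `]a, b[, continuous f} -> {in `]a, b[, forall x, 0 <= f x} ->
  (forall n, 0 < e n) -> nonincreasing_seq e -> e n @[n --> \oo] --> 0 ->
  (\int[mu]_(x in `[(a + e n)%R, (b - e n)%R]) (f x)%:E)%E @[n --> \oo] -->
  (\int[mu]_(x in `]a, b[) (f x)%:E)%E.
Proof.
move=> cf f0 e_gt0 e_noninc e_cvg.
pose I n := `[a + e n, b - e n].
have I_nd : nondecreasing_seq (fun n => [set` I n]).
  move=> n m /e_noninc enm; rewrite subsetEset => x /=.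
  by rewrite !in_itv /= => /andP[h1 h2]; apply/andP; split; lra.
have I_oo n : [set` I n] `<=` `]a, b[.
  move=> x /=; rewrite !in_itv /= => /andP[h1 h2].
  by apply/andP; split; have := e_gt0 n; lra.
have I_cup : \bigcup_n [set` I n] = [set` `]a, b[].
  apply/seteqP; split => [x [n _ /I_oo] //|x /=].
  rewrite in_itv /= => /andP[ax xb].
  have min_gt0 : 0 < Num.min (x - a) (b - x) by rewrite lt_min !subr_gt0 ax xb.
  have [N _ /(_ N (leqnn N))] := cvgr_lt 0 e_cvg _ min_gt0.
  rewrite /= lt_min => /andP[h1 h2].
  by exists N => //=; rewrite in_itv /=; apply/andP; split; lra.
have mf : measurable_fun `]a, b[ f.
  apply: open_continuous_measurable_fun; first exact: interval_open.
  by move=> x /set_mem; exact: cf.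
rewrite -I_cup; apply: ge0_nondecreasing_set_cvg_integral => // n.
- by apply/measurable_EFinP; exact: measurable_funS (I_oo n) mf.
- by move=> x /I_oo xab; rewrite lee_fin f0.
Qed.

Lemma ge0_continuous_FTC2oo (f F : R -> R) (a b : R) : a < b ->
  {in `]a, b[, continuous f} -> {in `]a, b[, forall x, 0 <= f x} ->
  {in `]a, b[, forall x : R, is_derive x 1 F (f x)} ->
  F x @[x --> a^'+] --> F a -> F x @[x --> b^'-] --> F b ->
  (\int[mu]_(x in `]a, b[) (f x)%:E = (F b - F a)%:E)%E.
Proof.
move=> ab cf f0 dF Fa Fb.
pose e n : R := (b - a) / 3 * harmonic n.
have ba3_gt0 : 0 < (b - a) / 3 by rewrite divr_gt0 // subr_gt0.
have e_gt0 n : 0 < e n by rewrite mulr_gt0 ?harmonic_gt0.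
have e_small n : 3 * e n <= b - a.
  have h1 : harmonic n <= 1 :> R by rewrite /harmonic invf_le1 ?ler1n ?ltr0n.
  by rewrite /e mulrA (mulrC 3) divfK // ler_piMr // subr_ge0 ltW.
have e_noninc : nonincreasing_seq e.
  move=> n m nm; apply: ler_wpM2l; first exact: ltW.
  by rewrite /harmonic /= lef_pV2 ?posrE ?ltr0n // ler_nat ltnS.
have e_cvg : e n @[n --> \oo] --> 0.
  by rewrite -(mulr0 ((b - a) / 3)); apply: cvgMl_tmp; exact: cvg_harmonic.
have FTC_e n : (\int[mu]_(x in `[(a + e n)%R, (b - e n)%R]) (f x)%:E
    = (F (b - e n) - F (a + e n))%:E)%E.
  by apply: continuous_FTC2_in_oo cf dF; have := e_small n; have := e_gt0 n; lra.
have int_cvg := ge0_cvg_integral_itv_cc_oo _ _ _ _ cf f0 e_gt0 e_noninc e_cvg.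
rewrite -(cvg_lim (@ereal_hausdorff R) int_cvg); apply: cvg_lim => //.
under eq_fun do rewrite FTC_e.
apply: cvg_EFin; first exact: nearW.
apply: cvgB.
- apply: (cvg_at_leftP _ _ _).1 Fb _ _; split => [n|]; first by have := e_gt0 n; lra.
  by rewrite -[X in _ --> X]subr0; apply: cvgB => //; exact: cvg_cst.
- apply: (cvg_at_rightP _ _ _).1 Fa _ _; split => [n|]; first by have := e_gt0 n; lra.
  by rewrite -[X in _ --> X]addr0; apply: cvgD => //; exact: cvg_cst.
Qed.

End FTC_open_interval.

Section lauricella_kernel.
Context {R : realType}.
Notation mu := (@lebesgue_measure R).

Lemma betaR_half_one : betaR (1 / 2 : R) 1 = 2%:E.
Proof.
rewrite /betaR subrr (_ : 1 / 2 - 1 = - 2^-1); last lra.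
transitivity (\int[mu]_(u in `]0%R, 1%R[) ((Num.sqrt u)^-1)%:E)%E.
  apply: eq_integral => u; rewrite inE /= in_itv /= => /andP[u0 _].
  by rewrite powRr0 mulr1 powRN powR12_sqrt // ltW.
rewrite (@ge0_continuous_FTC2oo _ _ (fun u => 2 * Num.sqrt u)) //.
- by rewrite sqrtr1 sqrtr0 mulr1 mulr0 subr0.
- move=> u; rewrite in_itv /= => /andP[u0 _].
  by apply: continuousV; [rewrite gt_eqF ?sqrtr_gt0 | exact: sqrt_continuous].
- move=> u; rewrite in_itv /= => /andP[u0 _].
  apply: is_derive_eq (is_deriveZ 2 (is_derive1_sqrt u0)) _.
  by rewrite /GRing.scale /= invfM mulrA divff ?mul1r.
- by apply: cvg_at_right_filter; apply: cvgMl_tmp; exact: sqrt_continuous.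
- by apply: cvg_at_left_filter; apply: cvgMl_tmp; exact: sqrt_continuous.
Qed.

Definition lauricella_kernel (p q r t : R) : R :=
  (1 + p * t)^-1 * (Num.sqrt (1 - q * t))^-1 * (Num.sqrt (1 + r * t))^-1.

Variables (p q r : R).
Hypotheses (p_ge0 : 0 <= p) (q_ge0 : 0 <= q) (q_lt1 : q < 1) (r_ge0 : 0 <= r).
Local Notation kernel := (lauricella_kernel p q r).
Lemma lauricella_kernel_continuous t :
  0 < 1 + p * t -> 0 < 1 - q * t -> 0 < 1 + r * t -> {for t, continuous kernel}.
Proof.
move=> pt qt rt; rewrite /lauricella_kernel.
have line_cont k : continuous (fun t : R => k * t).
  by move=> z; apply: cvgMl_tmp; exact: cvg_id.
have sqrtV_cont (g : R -> R) : {for t, continuous g} -> 0 < g t ->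
    {for t, continuous (fun t => (Num.sqrt (g t))^-1)}.
  move=> gc gt; apply: cvgV; first by rewrite gt_eqF ?sqrtr_gt0.
  exact: continuous_comp gc (@sqrt_continuous R _).
apply: cvgM; [apply: cvgM|].
- by apply: cvgV; [rewrite gt_eqF | apply: cvgD; [exact: cvg_cst | exact: line_cont]].
- by apply: sqrtV_cont qt; apply: cvgB; [exact: cvg_cst | exact: line_cont].
- by apply: sqrtV_cont rt; apply: cvgD; [exact: cvg_cst | exact: line_cont].
Qed.

Lemma lauricella_kernel_ge0 t : 0 <= t -> 0 <= kernel t.
Proof. by move=> t0; rewrite !mulr_ge0 ?invr_ge0 ?sqrtr_ge0 // addr_ge0 // mulr_ge0. Qed.

Lemma lauricella_kernel_continuous_in01 t : 0 <= t <= 1 -> {for t, continuous kernel}.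
Proof.
move=> /andP[t0 t1]; apply: lauricella_kernel_continuous.
- by rewrite ltr_wpDr // mulr_ge0.
- by rewrite subr_gt0; apply: le_lt_trans q_lt1; rewrite ler_piMr.
- by rewrite ltr_wpDr // mulr_ge0.
Qed.

Lemma lauricellaFD3_integrand u : 0 < u < 1 ->
  u `^ (1 / 2 - 1) * (1 - u) `^ (3 / 2 - 1 / 2 - 1)
    * \prod_(i < 3) (1 - [:: - p; q; - r]`_i * u) `^ (- [:: 1; 1 / 2; 1 / 2]`_i)
  = (Num.sqrt u)^-1 * kernel u.
Proof.
move=> /andP[u0 u1].
rewrite !big_ord_recr big_ord0 /= !mul1r.
have -> : 2^-1 - 1 = - 2^-1 :> R by lra.
have -> : 3 / 2 - 2^-1 - 1 = 0 :> R by lra.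
have pu : 0 <= 1 + p * u by rewrite addr_ge0 // mulr_ge0 // ltW.
have qu : 0 <= 1 - q * u.
  by rewrite subr_ge0; apply: le_trans (ltW q_lt1); rewrite ler_piMr // ltW.
have ru : 0 <= 1 + r * u by rewrite addr_ge0 // mulr_ge0 // ltW.
by rewrite powRr0 mulr1 !powRN !mulNr !opprK powRr1 // !powR12_sqrt // ltW.
Qed.

Lemma exists_lauricella_primitive : exists Phi : R -> R,
  {in `]0, 1[, forall t : R, is_derive t 1 Phi ((Num.sqrt t)^-1 * kernel t)} /\
  {in `[0, 1], continuous Phi}.
Proof.
have [beta beta_gt1 q_beta] : exists2 beta : R, 1 < beta & q * beta ^+ 2 < 1.
  have q1_gt0 : 0 < 1 + q by move: q_ge0; lra.
  exists (Num.sqrt (2 / (1 + q))).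
    by rewrite -{1}sqrtr1 ltr_sqrt // ltr_pdivlMr //; move: q_lt1; lra.
  by rewrite sqr_sqrtr ?divr_ge0 ?ltW // mulrA ltr_pdivrMr //; move: q_lt1; lra.
have sq_kernel_cont : {in `[-1, beta], continuous (fun w : R => 2 * kernel (w ^+ 2))}.
  move=> w; rewrite in_itv /= => /andP[w1 wb].
  have w2 : w ^+ 2 <= beta ^+ 2 by nra.
  apply: cvgMl_tmp; apply: (continuous_comp (f := fun w : R => w ^+ 2)).
    exact: exprn_continuous.
  apply: lauricella_kernel_continuous.
  - by rewrite ltr_wpDr // mulr_ge0 // sqr_ge0.
  - by rewrite subr_gt0; apply: le_lt_trans q_beta; rewrite ler_wpM2l.
  - by rewrite ltr_wpDr // mulr_ge0 // sqr_ge0.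
have beta_gtN1 : -1 < beta by lra.
have [G dG] := continuous_primitive _ _ _ beta_gtN1 sq_kernel_cont.
have sqrt_in t : 0 <= t <= 1 -> Num.sqrt t \in `]-1, beta[.
  move=> /andP[t0 t1]; rewrite in_itv /=; apply/andP; split.
    exact: lt_le_trans (@ltrN10 R) (sqrtr_ge0 t).
  by apply: le_lt_trans beta_gt1; rewrite -sqrtr1 ler_sqrt.
exists (G \o Num.sqrt); split => t; rewrite in_itv /= => t01.
- have /andP[t0 t1] := t01.
  apply: is_derive_eq (is_derive1_comp (dG _ (sqrt_in t _)) (is_derive1_sqrt t0)) _.
    by rewrite !ltW.
  rewrite sqr_sqrtr ?ltW //; field.
  by rewrite gt_eqF ?sqrtr_gt0.
- apply: continuous_comp; first exact: sqrt_continuous.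
  exact: is_derive_continuous (dG _ (sqrt_in t t01)).
Qed.

Variable Phi : R -> R.
Hypothesis dPhi :
  {in `]0, 1[, forall t : R, is_derive t 1 Phi ((Num.sqrt t)^-1 * kernel t)}.
Hypothesis cPhi : {in `[0, 1], continuous Phi}.

Lemma integral_lauricella_kernel :
  (\int[mu]_(t in `]0%R, 1%R[) ((Num.sqrt t)^-1 * kernel t)%:E = (Phi 1 - Phi 0)%:E)%E.
Proof.
apply: ge0_continuous_FTC2oo => //.
- move=> t; rewrite in_itv /= => /andP[t0 t1]; apply: cvgM.
    by apply: cvgV; [rewrite gt_eqF ?sqrtr_gt0 | exact: sqrt_continuous].
  by apply: lauricella_kernel_continuous_in01; rewrite !ltW.
- move=> t; rewrite in_itv /= => /andP[t0 _].
  by rewrite mulr_ge0 ?invr_ge0 ?sqrtr_ge0 ?lauricella_kernel_ge0 ?ltW.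
- by apply: cvg_at_right_filter; apply: cPhi; rewrite in_itv /= lexx ler01.
- by apply: cvg_at_left_filter; apply: cPhi; rewrite in_itv /= lexx ler01.
Qed.

Lemma lauricellaFD3_primitive :
  lauricellaFD (1 / 2) (fun i : 'I_3 => [:: 1; 1 / 2; 1 / 2]`_i) (3 / 2)
    (fun i : 'I_3 => [:: - p; q; - r]`_i) = ((Phi 1 - Phi 0) / 2)%:E.
Proof.
rewrite /lauricellaFD; transitivity ((\int[mu]_(t in `]0%R, 1%R[)
  ((Num.sqrt t)^-1 * kernel t)%:E) * (betaR (1 / 2 : R) 1)^-1)%E.
  congr (_ * (betaR _ _)^-1)%E; last lra.
  apply: eq_integral => u; rewrite inE /= in_itv /= => u01; congr EFin.
  exact: lauricellaFD3_integrand.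
by rewrite integral_lauricella_kernel betaR_half_one inver pnatr_eq0 /= -EFinM.
Qed.

End lauricella_kernel.

Section elliptic_integral.
Context {R : realType}.
Notation mu := (@lebesgue_measure R).

Lemma elliptic_substitution_identity (a b c s u : R) :
  c < b -> 0 < b -> 0 < s -> 0 < u -> b < u ^+ 2 -> u ^+ 2 < a ->
  1 / b * Num.sqrt (s / ((a - b) * (b - c))) / 2 *
    ((Num.sqrt ((u ^+ 2 - b) / s))^-1
     * lauricella_kernel (s / b) (s / (a - b)) (s / (b - c)) ((u ^+ 2 - b) / s)
     * (2 * u / s))
  = 1 / (u * Num.sqrt ((a - u ^+ 2) * (u ^+ 2 - b) * (u ^+ 2 - c))).
Proof.
move=> cb b0 s0 u0 bu ua.
have ab : 0 < a - b by lra.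
have bc : 0 < b - c by lra.
have au : 0 < a - u ^+ 2 by lra.
have ub : 0 < u ^+ 2 - b by lra.
have uc : 0 < u ^+ 2 - c by lra.
have p_eq : 1 + s / b * ((u ^+ 2 - b) / s) = u ^+ 2 / b by field; rewrite !gt_eqF.
have q_eq : 1 - s / (a - b) * ((u ^+ 2 - b) / s) = (a - u ^+ 2) / (a - b).
  by field; rewrite !gt_eqF.
have r_eq : 1 + s / (b - c) * ((u ^+ 2 - b) / s) = (u ^+ 2 - c) / (b - c).
  by field; rewrite !gt_eqF.
rewrite /lauricella_kernel p_eq q_eq r_eq.
apply/eqP; rewrite -(@eqrXn2 _ 2) //; last first.
- by rewrite div1r invr_ge0 mulr_ge0 ?sqrtr_ge0 // ltW.
- by rewrite !(mulr_ge0, invr_ge0, sqrtr_ge0, exprn_ge0, ler0n) // ltW.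
apply/eqP; rewrite !(exprMn, exprVn) !sqr_sqrtr ?divr_ge0 ?mulr_ge0 // ?ltW //.
by field; rewrite !gt_eqF.
Qed.

Lemma elliptic_integral_primitive (a b c y : R) (Phi : R -> R) :
  c < b -> 0 < b -> 0 < y -> b < y ^+ 2 -> y ^+ 2 < a ->
  {in `]0, 1[, forall t : R, is_derive t 1 Phi ((Num.sqrt t)^-1 *
    lauricella_kernel ((y ^+ 2 - b) / b) ((y ^+ 2 - b) / (a - b))
      ((y ^+ 2 - b) / (b - c)) t)} ->
  {in `[0, 1], continuous Phi} ->
  (\int[mu]_(u in `]Num.sqrt b, y[)
      (1 / (u * Num.sqrt ((a - u ^+ 2) * (u ^+ 2 - b) * (u ^+ 2 - c))))%:E
   = (1 / b * Num.sqrt ((y ^+ 2 - b) / ((a - b) * (b - c))) / 2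
      * (Phi 1 - Phi 0))%:E)%E.
Proof.
move=> cb b0 y0 by2 y2a dPhi cPhi.
set s := y ^+ 2 - b; set K := 1 / b * _ / 2.
have s0 : 0 < s by rewrite subr_gt0.
pose g (u : R) := (u ^+ 2 - b) / s.
have sqrtb_y : Num.sqrt b < y.
  by rewrite -(gtr0_norm y0) -sqrtr_sqr ltr_sqrt // exprn_gt0.
have u_range (u : R) : u \in `]Num.sqrt b, y[ ->
    [/\ 0 < u, b < u ^+ 2, u ^+ 2 < a & g u \in `]0, 1[].
  rewrite in_itv /= => /andP[bu uy].
  have u0 : 0 < u by apply: le_lt_trans bu; exact: sqrtr_ge0.
  have bu2 : b < u ^+ 2 by rewrite -(sqr_sqrtr (ltW b0)) ltrXn2r // sqrtr_ge0.
  have uy2 : u ^+ 2 < y ^+ 2 by rewrite ltrXn2r // ltW.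
  split => //; first lra.
  by rewrite in_itv /= divr_gt0 ?subr_gt0 // ltr_pdivrMr // mul1r /s; lra.
have g_deriv (u : R) : is_derive u 1 g (2 * u / s).
  apply: is_derive_eq.
  by rewrite scaler0 add0r; change (s^-1 * (u * 1 + u * 1 - 0) = 2 * u / s); ring.
have g_sqrtb : g (Num.sqrt b) = 0 by rewrite /g sqr_sqrtr ?subrr ?mul0r // ltW.
have g_y : g y = 1 by rewrite /g divff // gt_eqF.
have F_cont (u : R) : g u \in `[0, 1] ->
    {for u, continuous (fun u => K * Phi (g u))}.
  move=> gu01; apply: cvgMl_tmp; apply: continuous_comp; last exact: cPhi.
  exact: is_derive_continuous (g_deriv u).
have Q_cont : continuous (fun u : R => (a - u ^+ 2) * (u ^+ 2 - b) * (u ^+ 2 - c)).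
  move=> u; have sq_cont := @exprn_continuous R 2 u.
  by apply: cvgM; [apply: cvgM|]; apply: cvgB => //; exact: cvg_cst.
rewrite (@ge0_continuous_FTC2oo _ _ (fun u => K * Phi (g u)) _ _ sqrtb_y).
- by rewrite g_y g_sqrtb mulrBr.
- move=> u /u_range[u0 bu ua _].
  apply: cvgMl_tmp; apply: cvgV.
    by rewrite mulf_neq0 ?gt_eqF ?sqrtr_gt0 // !mulr_gt0 // subr_gt0 //; lra.
  apply: cvgM; first exact: cvg_id.
  exact: continuous_comp (Q_cont u) (@sqrt_continuous R _).
- move=> u /u_range[u0 bu ua _].
  by rewrite div1r invr_ge0 mulr_ge0 ?sqrtr_ge0 // ltW.
- move=> u /[dup] /u_range[u0 bu ua gu01] _.
  apply: is_derive_eq (is_deriveZ K (is_derive1_comp (dPhi _ gu01) (g_deriv u))) _.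
  rewrite -(elliptic_substitution_identity _ _ _ _ _ cb b0 s0 u0 bu ua).
  by rewrite /GRing.scale /= mulrA.
- by apply: cvg_at_right_filter; apply: F_cont; rewrite g_sqrtb in_itv /= lexx ler01.
- by apply: cvg_at_left_filter; apply: F_cont; rewrite g_y in_itv /= lexx ler01.
Qed.
End elliptic_integral.

Theorem mainTheorem4 (R : realType) (a b c y : R)
  (hcb : c < b) (hb : 0 < b) (hy : 0 < y) (hby : b < y ^+ 2) (hya : y ^+ 2 < a) :
  (\int[@lebesgue_measure R]_(u in `]Num.sqrt b, y[)
      (1 / (u * Num.sqrt ((a - u ^+ 2) * (u ^+ 2 - b) * (u ^+ 2 - c))))%:E
   = (1 / b * Num.sqrt ((y ^+ 2 - b) / ((a - b) * (b - c))))%:E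
     * lauricellaFD (1 / 2)
         (fun i : 'I_3 => [:: 1; 1 / 2; 1 / 2]`_i) (3 / 2)
         (fun i : 'I_3 => [:: - ((y ^+ 2 - b) / b); (y ^+ 2 - b) / (a - b);
                             - ((y ^+ 2 - b) / (b - c))]`_i))%E.
Proof.
have s_gt0 : 0 < y ^+ 2 - b by rewrite subr_gt0.
have p_ge0 : 0 <= (y ^+ 2 - b) / b by rewrite divr_ge0 // ltW.
have q_ge0 : 0 <= (y ^+ 2 - b) / (a - b) by rewrite divr_ge0 ?subr_ge0 // ltW //; lra.
have q_lt1 : (y ^+ 2 - b) / (a - b) < 1 by rewrite ltr_pdivrMr ?subr_gt0 //; lra.
have r_ge0 : 0 <= (y ^+ 2 - b) / (b - c) by rewrite divr_ge0 ?subr_ge0 // ltW.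
have [Phi [dPhi cPhi]] := exists_lauricella_primitive _ _ _ p_ge0 q_ge0 q_lt1 r_ge0.
rewrite (elliptic_integral_primitive _ _ _ _ _ hcb hb hy hby hya dPhi cPhi).
rewrite (lauricellaFD3_primitive _ _ _ p_ge0 q_ge0 q_lt1 r_ge0 _ dPhi cPhi) -EFinM.
by congr EFin; ring.
Qed.
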